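(* For every integer $n\ge1$ and every $u\in V$, $\Pr(E_{3u})<\dfrac{36\,\zeta(3)}{\ln^{2}(n+1)}$, where $\zeta(3)=\sum_{i\ge1} i^{-3}$.
   Context: For an integer $n\ge1$, the $n$-octahedral graph $G'_n=(V,E')$ is the undirected graph with vertex set $V=\{u\in\mathbb{Z}^3:|u_1|+|u_2|+|u_3|=n\}$ and edge set $E'=\{\{v,w\}\subset V: v\neq w,\ |v_i-w_i|\le 1 \text{ for all } i=1,2,3\}$. For $u,v\in V$, $d_{uv}$ denotes the shortest-path distance in $G'_n$, and $Z_u=\left(\sum_{w\in V\setminus\{u\}} d_{uw}^{-2}\right)^{-1}$. The OSW random graph $G_n=(V,E)$ is the directed graph in which, for every $\{u,v\}\in E'$, both $(u,v),(v,u)\in E$, and in addition each vertex $u\in V$, independently of the others, chooses one vertex $v\in V\setminus\{u\}$ with probability $Z_u d_{uv}^{-2}$ and the long-range edge $(u,v)$ is added; $C_{uv}$ denotes the event that $u$ chooses $v$. For an ordered pair $(x,y)$ of distinct vertices, say $(x,y)$ is of type $s$ if $\{x,y\}\in E'$, and of type $w$ if $d_{xy}\ge2$ and $C_{xy}$ occurs. A C3 rooted at $u$ of type $(t_1,t_2,t_3)\in\{s,w\}^3$ is a triple $(u,a,b)$ of pairwise distinct vertices such that $(u,a)$ is of type $t_1$, $(a,b)$ is of type $t_2$ and $(b,u)$ is of type $t_3$. $E_{3u}$ is the event that there exists a C3 rooted at $u$ of type $(s,w,w)$. *)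

From Stdlib Require Import ZArith Reals.
From mathcomp Require Import all_boot.
Set Implicit Arguments. Unset Strict Implicit. Unset Printing Implicit Defensive.

(* Points of the cube {-n..n}^3, encoded by ordinals i <-> i - n. *)
Definition cube (n : nat) : finType :=
  ('I_(n.*2.+1) * 'I_(n.*2.+1) * 'I_(n.*2.+1))%type.

Definition coordZ (n : nat) (i : 'I_(n.*2.+1)) : Z := (Z.of_nat i - Z.of_nat n)%Z.

Definition c1 n (x : cube n) : Z := coordZ x.1.1.
Definition c2 n (x : cube n) : Z := coordZ x.1.2.
Definition c3 n (x : cube n) : Z := coordZ x.2.

Definition onV n (x : cube n) : bool :=
  Z.eqb (Z.abs (c1 x) + Z.abs (c2 x) + Z.abs (c3 x))%Z (Z.of_nat n).

Definition V (n : nat) : finType := {x : cube n | onV x}.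

Definition adj n (v w : V n) : bool :=
  (v != w) &&
  [&& Z.leb (Z.abs (c1 (val v) - c1 (val w))) 1,
      Z.leb (Z.abs (c2 (val v) - c2 (val w))) 1 &
      Z.leb (Z.abs (c3 (val v) - c3 (val w))) 1].

Fixpoint reach n (k : nat) (u v : V n) : bool :=
  match k with
  | 0 => u == v
  | k.+1 => reach k u v || [exists w, reach k u w && adj w v]
  end.

(* Shortest-path distance d_uv: least k with reach k u v
   (G'_n is connected, so such k < #|V n| exists). *)
Definition dist n (u v : V n) : nat := find (fun k => reach k u v) (iota 0 #|V n|).

Definition Zu n (u : V n) : R :=
  Rinv (\big[Rplus/R0]_(w : V n | w != u) Rinv (pow (INR (dist u w)) 2)).

Definition pchoose n (u v : V n) : R :=
  if v == u then R0 else Rmult (Zu u) (Rinv (pow (INR (dist u v)) 2)).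

(* Sample space: choice functions c : V -> V (c x = the vertex chosen by x);
   product (independent) probability weight. *)
Definition weight n (c : {ffun V n -> V n}) : R :=
  \big[Rmult/R1]_(x : V n) pchoose x (c x).

Definition Pr n (A : pred {ffun V n -> V n}) : R :=
  \big[Rplus/R0]_(c : {ffun V n -> V n} | A c) weight c.

Definition type_s n (x y : V n) : bool := adj x y.
Definition type_w n (c : {ffun V n -> V n}) (x y : V n) : bool :=
  (x != y) && (2 <= dist x y) && (c x == y).

Definition E3 n (u : V n) : pred {ffun V n -> V n} :=
  fun c => [exists a : V n, exists b : V n,
    [&& u != a, a != b, b != u, type_s u a, type_w c a b & type_w c b u]].

Definition zeta3_is (z : R) : Prop :=
  Un_cv (fun N => sum_f_R0 (fun i => Rinv (pow (INR i.+1) 3)) N) z.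

(* A C3 of type (s,w,w) rooted at u consists of a neighbour a of u and the two choices
   a -> b and b -> u with d_ab, d_bu >= 2.  The choices are independent, so by the union
   bound Pr(E_3u) is at most the sum over the at most 6 neighbours a and over b of
   Z_a d_ab^-2 Z_b d_bu^-2.  Every normaliser satisfies Z_x^-1 >= ln(n+1): for each
   coordinate f of x and each k <= |x_f| there are k vertices in the closed orthant of x at
   distance at most k, which yields harmonic sums.  By AM-GM the sum over b is then at most
   ln(n+1)^-2 times a bound on sum_b d^-4, and this sum is at most 13/2 because the graph
   distance dominates the coordinate gaps and b is determined by its first two coordinates
   and the sign of the third.  Hence Pr(E_3u) <= 39 / ln^2(n+1), and zeta(3) >= 9/8. *)

From Pilot Require Import Defs.
From Stdlib Require Import ZArith Reals Lra Lia.
From mathcomp Require Import all_boot zify ssrZ Rstruct.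
Set Implicit Arguments. Unset Strict Implicit. Unset Printing Implicit Defensive.
Local Open Scope R_scope.
Local Notation dist := Defs.dist.

(** * Coordinates *)

Lemma coordZ_bounds n (i : 'I_(n.*2.+1)) : (- Z.of_nat n <= coordZ i <= Z.of_nat n)%Z.
Proof. rewrite /coordZ; have := ltn_ord i; lia. Qed.

Lemma coordZ_inj n : injective (@coordZ n).
Proof. rewrite /coordZ => i j h; apply: val_inj => /=; lia. Qed.

Definition ordZ n (c : Z) : 'I_(n.*2.+1) := inord (Z.to_nat (c + Z.of_nat n)).

Lemma coordZ_ordZ n c : (- Z.of_nat n <= c <= Z.of_nat n)%Z -> coordZ (@ordZ n c) = c.
Proof.
move=> hc; rewrite /coordZ /ordZ inordK; first lia.
by rewrite ltnS; lia.
Qed.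

Definition X1 n (v : V n) := Defs.c1 (val v).
Definition X2 n (v : V n) := c2 (val v).
Definition X3 n (v : V n) := c3 (val v).

(* The vertex with coordinates (a, b, c), or the default [v0] if that point is not in [V n]. *)
Definition mkV n (v0 : V n) (a b c : Z) : V n := insubd v0 (ordZ n a, ordZ n b, ordZ n c).

Lemma sum_abs_X n (v : V n) : (Z.abs (X1 v) + Z.abs (X2 v) + Z.abs (X3 v) = Z.of_nat n)%Z.
Proof. exact/Z.eqb_eq/(valP v). Qed.

Lemma X_mkV n (v0 : V n) a b c :
  (Z.abs a + Z.abs b + Z.abs c = Z.of_nat n)%Z ->
  [/\ X1 (mkV v0 a b c) = a, X2 (mkV v0 a b c) = b & X3 (mkV v0 a b c) = c].
Proof.
move=> h.
have [ha hb hc] : [/\ (- Z.of_nat n <= a <= Z.of_nat n)%Z, (- Z.of_nat n <= b <= Z.of_nat n)%Z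
                    & (- Z.of_nat n <= c <= Z.of_nat n)%Z] by split; lia.
have hon : onV (ordZ n a, ordZ n b, ordZ n c).
  by rewrite /onV /Defs.c1 /c2 /c3 /= !coordZ_ordZ //; apply/Z.eqb_eq.
rewrite /X1 /X2 /X3 /mkV insubdK //.
by rewrite /Defs.c1 /c2 /c3 /= !coordZ_ordZ.
Qed.

Lemma V_ext n (v w : V n) : X1 v = X1 w -> X2 v = X2 w -> X3 v = X3 w -> v = w.
Proof.
rewrite /X1 /X2 /X3 /Defs.c1 /c2 /c3 => h1 h2 h3; apply: val_inj.
case: (val v) h1 h2 h3 => [[p q] r]; case: (val w) => [[p' q'] r'] /= h1 h2 h3.
by rewrite (coordZ_inj h1) (coordZ_inj h2) (coordZ_inj h3).
Qed.

Lemma adjP n (v w : V n) :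
  adj v w <-> v <> w /\ (Z.abs (X1 v - X1 w) <= 1 /\ Z.abs (X2 v - X2 w) <= 1
                        /\ Z.abs (X3 v - X3 w) <= 1)%Z.
Proof.
rewrite /adj /X1 /X2 /X3; split.
  by case/andP=> /eqP hne /and3P [/Z.leb_le h1 /Z.leb_le h2 /Z.leb_le h3].
case=> hne [h1 [h2 h3]]; apply/andP; split; first exact/eqP.
by apply/and3P; split; apply/Z.leb_le.
Qed.

Lemma adj_sym n (v w : V n) : adj v w -> adj w v.
Proof. by move/adjP=> [hne h]; apply/adjP; split; [move=> e; apply: hne | lia]. Qed.

(** * Graph distance *)

Lemma reach_coord_le n k (u v : V n) : reach k u v ->
  (Z.abs (X1 u - X1 v) <= Z.of_nat k /\ Z.abs (X2 u - X2 v) <= Z.of_nat k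
   /\ Z.abs (X3 u - X3 v) <= Z.of_nat k)%Z.
Proof.
elim: k v => [|k IH] v /=; first by move/eqP=> <-; lia.
case/orP=> [/IH|/existsP [w /andP [/IH h /adjP [_ h']]]]; lia.
Qed.

Lemma card_V_ge n (v0 : V n) : (n.*2.+1 <= #|V n|)%N.
Proof.
pose f (i : 'I_(n.*2.+1)) := mkV v0 (coordZ i) (Z.of_nat n - Z.abs (coordZ i)) 0.
suff /leq_card : injective f by rewrite card_ord.
move=> i j hij; apply: coordZ_inj.
have := coordZ_bounds i; have := coordZ_bounds j => hj hi.
have [<- _ _] := @X_mkV n v0 (coordZ i) (Z.of_nat n - Z.abs (coordZ i)) 0 ltac:(lia).
have [<- _ _] := @X_mkV n v0 (coordZ j) (Z.of_nat n - Z.abs (coordZ j)) 0 ltac:(lia).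
exact: (congr1 (@X1 n) hij).
Qed.

Lemma dist_le n k (u v : V n) : reach k u v -> (k < #|V n|)%N -> (dist u v <= k)%N.
Proof.
move=> hr hk; rewrite /dist; case: leqP => // hlt.
by have := before_find 0%N hlt; rewrite nth_iota // add0n hr.
Qed.

(* [dist] is the junk value [#|V n|] when no path is found; this value is large enough
   for the coordinate bounds below to hold anyway. *)
Lemma dist_spec n (u v : V n) : dist u v = #|V n| \/ reach (dist u v) u v.
Proof.
rewrite /dist; set p := fun k => reach k u v.
case: (ltnP (find p (iota 0 #|V n|)) #|V n|) => h.
  right; have := @nth_find _ 0%N p (iota 0 #|V n|); rewrite nth_iota ?add0n //.
  by apply; rewrite has_find size_iota.
by left; have := find_size p (iota 0 #|V n|); rewrite size_iota; lia.
Qed.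

Lemma coord_le_dist n (u v : V n) :
  (Z.abs (X1 u - X1 v) <= Z.of_nat (dist u v) /\ Z.abs (X2 u - X2 v) <= Z.of_nat (dist u v)
   /\ Z.abs (X3 u - X3 v) <= Z.of_nat (dist u v))%Z.
Proof.
case: (dist_spec u v) => [->|]; last exact: reach_coord_le.
have := card_V_ge u; have := sum_abs_X u; have := sum_abs_X v; lia.
Qed.

Lemma dist_gt0 n (u v : V n) : u <> v -> (0 < dist u v)%N.
Proof.
move=> hne; rewrite lt0n; apply/eqP=> h0; apply: hne.
have := coord_le_dist u v; rewrite h0 => h; apply: V_ext; lia.
Qed.

Definition same_sign (p q : Z) : Prop := ((0 <= p /\ 0 <= q) \/ (p <= 0 /\ q <= 0))%Z.

Lemma same_sign_refl p : same_sign p p.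
Proof. rewrite /same_sign; lia. Qed.

Definition same_orthant n (x w : V n) : Prop :=
  [/\ same_sign (X1 x) (X1 w), same_sign (X2 x) (X2 w) & same_sign (X3 x) (X3 w)].

Definition l1dist n (x w : V n) : Z :=
  (Z.abs (X1 x - X1 w) + Z.abs (X2 x - X2 w) + Z.abs (X3 x - X3 w))%Z.

Definition orthant_sign (p q : Z) : Z := if (p <? 0)%Z || (q <? 0)%Z then (-1)%Z else 1%Z.

Lemma orthant_signP p q : same_sign p q ->
  (orthant_sign p q = 1 /\ 0 <= p /\ 0 <= q \/ orthant_sign p q = -1 /\ p <= 0 /\ q <= 0)%Z.
Proof.
by rewrite /orthant_sign /same_sign; case: (Z.ltb_spec p 0); case: (Z.ltb_spec q 0) => /=; lia.
Qed.

Lemma abs_sub_same_sign p q : same_sign p q -> Z.abs (p - q) = Z.abs (Z.abs p - Z.abs q).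
Proof. rewrite /same_sign; lia. Qed.

Lemma orthant_sign_mul p q c : same_sign p q -> (0 <= c)%Z ->
  [/\ Z.abs (orthant_sign p q * c) = c, Z.abs (p - orthant_sign p q * c) = Z.abs (Z.abs p - c),
      Z.abs (orthant_sign p q * c - q) = Z.abs (c - Z.abs q) & same_sign p (orthant_sign p q * c)].
Proof. by move=> /orthant_signP [[-> ?]|[-> ?]] ?; rewrite /same_sign; split; lia. Qed.

(* Moving one unit of mass from a coordinate where [b] exceeds [a] to one where it falls short. *)
Lemma transfer_unit a1 a2 a3 b1 b2 b3 :
  (0 <= a1 -> 0 <= a2 -> 0 <= a3 -> 0 <= b1 -> 0 <= b2 -> 0 <= b3 ->
  a1 + a2 + a3 = b1 + b2 + b3 ->
  0 < Z.abs (a1 - b1) + Z.abs (a2 - b2) + Z.abs (a3 - b3) ->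
  exists c1 c2 c3, [/\ 0 <= c1, 0 <= c2, 0 <= c3 & c1 + c2 + c3 = b1 + b2 + b3] /\
   [/\ Z.abs (c1 - b1) <= 1, Z.abs (c2 - b2) <= 1 & Z.abs (c3 - b3) <= 1] /\
   Z.abs (a1 - c1) + Z.abs (a2 - c2) + Z.abs (a3 - c3) + 2 =
   Z.abs (a1 - b1) + Z.abs (a2 - b2) + Z.abs (a3 - b3))%Z.
Proof.
move=> *.
have : (a1 < b1 \/ a2 < b2 \/ a3 < b3)%Z by lia.
have : (b1 < a1 \/ b2 < a2 \/ b3 < a3)%Z by lia.
case=> [g|[g|g]] [h|[h|h]]; try lia.
- by exists (b1 + 1)%Z, (b2 - 1)%Z, b3; repeat split; lia.
- by exists (b1 + 1)%Z, b2, (b3 - 1)%Z; repeat split; lia.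
- by exists (b1 - 1)%Z, (b2 + 1)%Z, b3; repeat split; lia.
- by exists b1, (b2 + 1)%Z, (b3 - 1)%Z; repeat split; lia.
- by exists (b1 - 1)%Z, b2, (b3 + 1)%Z; repeat split; lia.
- by exists b1, (b2 - 1)%Z, (b3 + 1)%Z; repeat split; lia.
Qed.

Lemma reach_same_orthant n m (x w : V n) :
  same_orthant x w -> l1dist x w = (2 * Z.of_nat m)%Z -> reach m x w.
Proof.
rewrite /l1dist; elim: m w => [|m IH] w [h1 h2 h3] hL.
  have -> : w = x by apply: V_ext; clear -hL; lia.
  exact: eqxx.
rewrite (abs_sub_same_sign h1) (abs_sub_same_sign h2) (abs_sub_same_sign h3) in hL.
have hx := sum_abs_X x; have hw := sum_abs_X w.
have [c1' [c2' [c3' [[p1 p2 p3 ps] [[q1 q2 q3] qL]]]]] :=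
  @transfer_unit (Z.abs (X1 x)) (Z.abs (X2 x)) (Z.abs (X3 x))
    (Z.abs (X1 w)) (Z.abs (X2 w)) (Z.abs (X3 w)) (Z.abs_nonneg _) (Z.abs_nonneg _)
    (Z.abs_nonneg _) (Z.abs_nonneg _) (Z.abs_nonneg _) (Z.abs_nonneg _)
    (etrans hx (esym hw)) ltac:(clear -hL; lia).
have [k1 l1 m1 o1] := orthant_sign_mul h1 p1.
have [k2 l2 m2 o2] := orthant_sign_mul h2 p2.
have [k3 l3 m3 o3] := orthant_sign_mul h3 p3.
set y := mkV x (orthant_sign (X1 x) (X1 w) * c1') (orthant_sign (X2 x) (X2 w) * c2')
               (orthant_sign (X3 x) (X3 w) * c3').
have [y1 y2 y3] : [/\ X1 y = (orthant_sign (X1 x) (X1 w) * c1')%Z,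
    X2 y = (orthant_sign (X2 x) (X2 w) * c2')%Z & X3 y = (orthant_sign (X3 x) (X3 w) * c3')%Z].
  by apply: X_mkV; rewrite k1 k2 k3 ps hw.
apply/orP; right; apply/existsP; exists y; apply/andP; split.
  apply: IH; first by split; rewrite ?y1 ?y2 ?y3.
  by rewrite y1 y2 y3 l1 l2 l3; clear -qL hL; lia.
apply/adjP; rewrite y1 y2 y3 m1 m2 m3; split; last by clear -q1 q2 q3; lia.
move=> eyw; have : (c1' = Z.abs (X1 w) /\ c2' = Z.abs (X2 w) /\ c3' = Z.abs (X3 w)).
  by rewrite -eyw y1 y2 y3 k1 k2 k3.
clear -qL hL; lia.
Qed.

Lemma Rinv_ge0 x : 0 <= x -> 0 <= / x.
Proof.
case=> [hx|<-]; last by rewrite Rinv_0; lra.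
exact/Rlt_le/Rinv_0_lt_compat.
Qed.

Lemma inv_INR_pow_ge0 k e : 0 <= / INR k ^ e.
Proof. exact/Rinv_ge0/pow_le/pos_INR. Qed.

Section RealSums.
Variables (I : Type) (r : seq I) (P : pred I).

Lemma Rsum_le (F G : I -> R) : (forall i, P i -> F i <= G i) ->
  \big[Rplus/R0]_(i <- r | P i) F i <= \big[Rplus/R0]_(i <- r | P i) G i.
Proof. by move=> h; apply: (big_ind2 (fun a b => a <= b)) => *; [lra | lra | apply: h]. Qed.

Lemma Rsum_ge0 (F : I -> R) : (forall i, P i -> 0 <= F i) ->
  0 <= \big[Rplus/R0]_(i <- r | P i) F i.
Proof. by move=> h; apply: (big_ind (fun a => 0 <= a)) => *; [lra | lra | apply: h]. Qed.

End RealSums.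

Lemma Rsum_subset (I : finType) (P Q : pred I) (F : I -> R) :
  (forall i, Q i -> 0 <= F i) -> (forall i, P i -> Q i) ->
  \big[Rplus/R0]_(i | P i) F i <= \big[Rplus/R0]_(i | Q i) F i.
Proof.
move=> h0 hPQ; rewrite [X in _ <= X](bigID P) /=.
have -> : \big[Rplus/R0]_(i | Q i && P i) F i = \big[Rplus/R0]_(i | P i) F i.
  by apply: eq_bigl => i; case hp: (P i); rewrite ?andbT ?andbF ?hPQ.
have := @Rsum_ge0 _ (index_enum I) (fun i => Q i && ~~ P i) F (fun i h => h0 i (proj1 (andP h))).
lra.
Qed.

Lemma Rsum_ge_term (I : finType) (P : pred I) (F : I -> R) (j : I) :
  (forall i, P i -> 0 <= F i) -> P j -> F j <= \big[Rplus/R0]_(i | P i) F i.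
Proof.
move=> h0 hj; rewrite (bigD1 j) //=.
have := @Rsum_ge0 _ (index_enum I) (fun i => P i && (i != j)) F (fun i h => h0 i (proj1 (andP h))).
lra.
Qed.

Lemma Rsum_const_seq (I : Type) (r : seq I) (c : R) :
  \big[Rplus/R0]_(i <- r) c = INR (size r) * c.
Proof.
elim: r => [|i r IH]; first by rewrite big_nil /=; lra.
by rewrite big_cons IH (_ : size (i :: r) = (size r).+1) // S_INR; lra.
Qed.

Lemma Rsum_uniq_le (I : finType) (r : seq I) (P : pred I) (F : I -> R) :
  uniq r -> (forall i, i \in r -> P i) -> (forall i, P i -> 0 <= F i) ->
  \big[Rplus/R0]_(i <- r) F i <= \big[Rplus/R0]_(i | P i) F i.
Proof. by move=> ur hrP h0; rewrite big_uniq //; apply: Rsum_subset. Qed.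

Lemma Rsum_const (I : finType) (P : pred I) (c : R) :
  \big[Rplus/R0]_(i | P i) c = INR #|P| * c.
Proof. by rewrite -big_filter Rsum_const_seq -cardE. Qed.

Lemma Rinv_pow_INR_le d k e : (0 < d <= k)%N -> / INR k ^ e <= / INR d ^ e.
Proof.
move=> /andP [/ltP hd /leP hk]; apply: Rinv_le_contravar; first exact/pow_lt/lt_0_INR.
by apply: pow_incr; split; [exact: pos_INR | exact: le_INR].
Qed.

Lemma Rsum_inj_le (I J : finType) (P : pred I) (h : I -> J) (F : J -> R) :
  (forall j, 0 <= F j) -> {in P &, injective h} ->
  \big[Rplus/R0]_(i | P i) F (h i) <= \big[Rplus/R0]_j F j.
Proof.
move=> h0 hinj; rewrite -[X in X <= _](big_imset F hinj) /=.
exact: Rsum_subset.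
Qed.

Lemma Rsum_nat_widen (F : nat -> R) m m' : (forall i, 0 <= F i) -> (m <= m')%N ->
  \big[Rplus/R0]_(0 <= i < m) F i <= \big[Rplus/R0]_(0 <= i < m') F i.
Proof.
move=> h0 hm; rewrite [X in _ <= X](@big_cat_nat _ _ _ m) //=.
have := Rsum_ge0 (index_iota m m') (P := xpredT) (fun i _ => h0 i); lra.
Qed.

(** * The probability of a directed 3-cycle *)

Definition Zinv n (x : V n) : R := \big[Rplus/R0]_(w | w != x) / INR (dist x w) ^ 2.

Lemma Zinv_ge0 n (x : V n) : 0 <= Zinv x.
Proof. by apply: Rsum_ge0 => w _; apply: inv_INR_pow_ge0. Qed.

Lemma pchoose_ge0 n (x y : V n) : 0 <= pchoose x y.
Proof.
rewrite /pchoose; case: eqP => _; first lra.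
exact/Rmult_le_pos/inv_INR_pow_ge0/Rinv_ge0/Zinv_ge0.
Qed.

Lemma sum_pchoose_le1 n (x : V n) : 0 <= \big[Rplus/R0]_y pchoose x y <= 1.
Proof.
split; first by apply: Rsum_ge0 => y _; apply: pchoose_ge0.
rewrite (bigD1 x) //= /pchoose eqxx Rplus_0_l.
rewrite (eq_bigr (fun y => Zu x * / INR (dist x y) ^ 2)) => [|y /negbTE -> //].
rewrite -big_distrr /= -/(Zinv x) /Zu -/(Zinv x).
have [->|h] := Req_dec (Zinv x) 0; first by rewrite Rinv_0; lra.
by rewrite Rinv_l //; lra.
Qed.

Lemma weight_ge0 n (c : {ffun V n -> V n}) : 0 <= weight c.
Proof.
apply: (big_ind (fun x => 0 <= x)) => *; [lra | exact: Rmult_le_pos | exact: pchoose_ge0].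
Qed.

Lemma Rprod_unit_interval (I : finType) (P : pred I) (F : I -> R) :
  (forall i, P i -> 0 <= F i <= 1) -> 0 <= \big[Rmult/R1]_(i | P i) F i <= 1.
Proof.
move=> h; apply: (big_ind (fun a => 0 <= a <= 1)) => [|a b ha hb|]; [lra | nra | exact: h].
Qed.

(* The weight is a product: the factors of [a] and [b] are isolated and every other factor sums
   to at most 1. *)
Lemma Pr_two_choices_le n (a b u : V n) : a != b ->
  \big[Rplus/R0]_(c : {ffun V n -> V n} | (c a == b) && (c b == u)) weight c
  <= pchoose a b * pchoose b u.
Proof.
move=> hab.
pose F (x y : V n) := if x == a then (if y == b then pchoose x y else 0)
                      else if x == b then (if y == u then pchoose x y else 0)
                      else pchoose x y.
have -> : \big[Rplus/R0]_(c : {ffun V n -> V n} | (c a == b) && (c b == u)) weight c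
        = \big[Rplus/R0]_(c : {ffun V n -> V n}) \big[Rmult/R1]_x F x (c x).
  rewrite big_mkcond; apply: eq_bigr => c _; rewrite /weight.
  case: ifP => [/andP [/eqP hca /eqP hcb]|/nandP [hc|hc]].
  - apply: eq_bigr => x _; rewrite /F.
    by case: eqP => [->|_]; [rewrite hca eqxx | case: eqP => [->|//]; rewrite hcb eqxx].
  - by rewrite (bigD1 a) //= /F eqxx (negbTE hc) Rmult_0_l.
  - by rewrite (bigD1 b) //= /F (negbTE hc) eq_sym (negbTE hab) eqxx Rmult_0_l.
rewrite -bigA_distr_bigA (bigD1 a) //= (bigD1 b (P := fun x => x != a)) /=; last by rewrite eq_sym.
have -> : \big[Rplus/R0]_y F a y = pchoose a b.
  by rewrite /F eqxx -big_mkcond /=; exact: big_pred1_eq.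
have -> : \big[Rplus/R0]_y F b y = pchoose b u.
  by rewrite /F eq_sym (negbTE hab) eqxx -big_mkcond /=; exact: big_pred1_eq.
have [h0 h1] : 0 <= \big[Rmult/R1]_(x | (x != a) && (x != b)) \big[Rplus/R0]_y F x y <= 1.
  apply: Rprod_unit_interval => x /andP [h1 h2].
  by rewrite /F (negbTE h1) (negbTE h2); exact: sum_pchoose_le1.
rewrite -Rmult_assoc -[X in _ <= X]Rmult_1_r.
exact/Rmult_le_compat_l/h1/Rmult_le_pos/pchoose_ge0/pchoose_ge0.
Qed.

Definition long_link n (x y : V n) : bool := (x != y) && (2 <= dist x y)%N.

Lemma Pr_E3_le n (u : V n) :
  Pr (E3 u) <= \big[Rplus/R0]_(a | adj u a)
                 \big[Rplus/R0]_(b | long_link a b && long_link b u) (pchoose a b * pchoose b u).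
Proof.
pose G (c : {ffun V n -> V n}) (a b : V n) := if (c a == b) && (c b == u) then weight c else 0.
have G_ge0 c a b : 0 <= G c a b by rewrite /G; case: ifP => _; [exact: weight_ge0 | lra].
pose cycles c := \big[Rplus/R0]_(a | adj u a)
                   \big[Rplus/R0]_(b | long_link a b && long_link b u) G c a b.
have cycles_ge0 c : 0 <= cycles c by do 2!(apply: Rsum_ge0 => ? _).
have weight_le c : E3 u c -> weight c <= cycles c.
  case/existsP=> a /existsP [b /and5P [_ hab hbu hua /andP [hw1 hw2]]].
  move: hw1 hw2; rewrite /type_w => /andP [/andP [_ hd1] hca] /andP [/andP [_ hd2] hcb].
  have <- : G c a b = weight c by rewrite /G hca hcb.
  apply: (Rle_trans _ (\big[Rplus/R0]_(b | long_link a b && long_link b u) G c a b)).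
    by apply: Rsum_ge_term => //; rewrite /long_link hab hbu hd1 hd2.
  by apply: (Rsum_ge_term (F := fun a => \big[Rplus/R0]_(b | _) G c a b)) => // *;
     apply: Rsum_ge0.
apply: (Rle_trans _ (\big[Rplus/R0]_c cycles c)).
  rewrite /Pr; apply: (Rle_trans _ (\big[Rplus/R0]_(c | E3 u c) cycles c)).
    exact: Rsum_le weight_le.
  by apply: Rsum_subset => // c _; apply: cycles_ge0.
rewrite /cycles exchange_big; apply: Rsum_le => a _.
rewrite exchange_big; apply: Rsum_le => b /andP [/andP [hab _] _].
by rewrite /G -big_mkcond; exact: Pr_two_choices_le.
Qed.

(** * A lower bound on the normalisers *)

Lemma ln_succ_le x : 0 < x -> ln (x + 1) <= ln x + / x.
Proof.
move=> hx; have hix := Rinv_0_lt_compat _ hx.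
have -> : x + 1 = x * (1 + / x) by field; lra.
rewrite ln_mult; try lra.
suff : ln (1 + / x) < / x by lra.
rewrite -[X in _ < X]ln_exp; apply: ln_increasing; first lra.
by apply: exp_ineq1; lra.
Qed.

Lemma ln_succ_le_harmonic a : ln (INR a + 1) <= \big[Rplus/R0]_(k <- iota 1 a) / INR k.
Proof.
elim: a => [|a IH]; first by rewrite big_nil /= Rplus_0_l ln_1; lra.
rewrite -addn1 iotaD big_cat big_seq1 add1n addn1.
have := ln_succ_le (lt_0_INR a.+1 (Nat.lt_0_succ a)); rewrite !S_INR /=; lra.
Qed.

Lemma ln_add3_le a b c : 0 <= a -> 0 <= b -> 0 <= c ->
  ln (a + b + c + 1) <= ln (a + 1) + ln (b + 1) + ln (c + 1).
Proof.
move=> ha hb hc; rewrite -!ln_mult; try nra.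
have [hlt|->] : a + b + c + 1 < (a + 1) * (b + 1) * (c + 1) \/
                a + b + c + 1 = (a + 1) * (b + 1) * (c + 1).
  have := Rmult_le_pos _ _ (Rmult_le_pos _ _ ha hb) hc; nra.
- by apply/Rlt_le/ln_increasing; lra.
- exact: Rle_refl.
Qed.

Lemma allpairs_pair_uniq (S T : eqType) (s : seq S) (t : S -> seq T) :
  uniq s -> (forall x, uniq (t x)) -> uniq [seq (x, y) | x <- s, y <- t x].
Proof.
move=> us ut; apply: allpairs_uniq_dep => //.
by move=> [x y] [x' y'] _ _ /= [-> ->].
Qed.

Definition pick3 (A : Type) (f : nat) (a1 a2 a3 : A) : A :=
  match f with 0 => a1 | 1 => a2 | _ => a3 end.

(* Moving [k] units of mass off coordinate [f] in the [k] ways indexed by [s < k] gives [k]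
   distinct vertices at distance at most [k]; for [k <= |x_f|] they contribute the harmonic
   sum of [|x_f|] to [Zinv x]. *)
Definition axis_move (f : nat) (k s a1 a2 a3 : Z) : Z * Z * Z :=
  match f with
  | 0 => (a1 - k, a2 + s, a3 + k - s)%Z
  | 1 => (a1 + s, a2 - k, a3 + k - s)%Z
  | _ => (a1 + s, a2 + k - s, a3 - k)%Z
  end.

Lemma axis_move_spec f k s a1 a2 a3 :
  (1 <= k <= pick3 f a1 a2 a3 -> 0 <= s < k -> 0 <= a1 -> 0 <= a2 -> 0 <= a3 ->
  let: (b1, b2, b3) := axis_move f k s a1 a2 a3 in
  [/\ 0 <= b1, 0 <= b2, 0 <= b3, b1 + b2 + b3 = a1 + a2 + a3
    & Z.abs (a1 - b1) + Z.abs (a2 - b2) + Z.abs (a3 - b3) = 2 * k])%Z.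
Proof. by case: f => [|[|f]]; cbn [pick3 axis_move] => *; split; lia. Qed.

Lemma axis_move_inj f k s f' k' s' a1 a2 a3 : (f < 3)%N -> (f' < 3)%N ->
  (1 <= k -> 0 <= s < k -> 1 <= k' -> 0 <= s' < k' ->
  axis_move f k s a1 a2 a3 = axis_move f' k' s' a1 a2 a3 -> f = f' /\ k = k' /\ s = s')%Z.
Proof.
by case: f => [|[|[|f]]] //; case: f' => [|[|[|f']]] //= _ _ ? ? ? ? [? ? ?]; lia.
Qed.

Section FarVertices.
Variables (n : nat) (x : V n).

Definition axis_len (f : nat) : nat := Z.to_nat (Z.abs (pick3 f (X1 x) (X2 x) (X3 x))).

Definition far_index : seq (nat * nat * nat) :=
  [seq (fk, s) | fk <- [seq (f, k) | f <- iota 0 3, k <- iota 1 (axis_len f)], s <- iota 0 fk.2].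

Definition far_move (t : nat * nat * nat) : Z * Z * Z :=
  axis_move t.1.1 (Z.of_nat t.1.2) (Z.of_nat t.2) (Z.abs (X1 x)) (Z.abs (X2 x)) (Z.abs (X3 x)).

Definition far_vertex (t : nat * nat * nat) : V n :=
  let: (b1, b2, b3) := far_move t in
  mkV x (orthant_sign (X1 x) (X1 x) * b1) (orthant_sign (X2 x) (X2 x) * b2)
        (orthant_sign (X3 x) (X3 x) * b3).

Lemma far_indexP f k s : ((f, k), s) \in far_index ->
  [/\ (f < 3)%N, (1 <= k <= axis_len f)%N & (s < k)%N].
Proof.
case/allpairsPdep=> -[f' k'] [s' [/allpairsPdep [f'' [k'' [hf hk [-> ->]]]] hs [-> -> ->]]].
by move: hf hk hs; rewrite !mem_iota /= => *; split; lia.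
Qed.

Lemma far_vertexP f k s : ((f, k), s) \in far_index ->
  let: (b1, b2, b3) := far_move (f, k, s) in
  [/\ X1 (far_vertex (f, k, s)) = (orthant_sign (X1 x) (X1 x) * b1)%Z,
      X2 (far_vertex (f, k, s)) = (orthant_sign (X2 x) (X2 x) * b2)%Z,
      X3 (far_vertex (f, k, s)) = (orthant_sign (X3 x) (X3 x) * b3)%Z,
      same_orthant x (far_vertex (f, k, s))
    & l1dist x (far_vertex (f, k, s)) = (2 * Z.of_nat k)%Z].
Proof.
move=> /far_indexP [hf hk hs]; rewrite /far_vertex.
have hx := sum_abs_X x.
have := @axis_move_spec f (Z.of_nat k) (Z.of_nat s) (Z.abs (X1 x)) (Z.abs (X2 x)) (Z.abs (X3 x)).
rewrite /far_move /=; case: axis_move => [[b1 b2] b3] hb.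
have [p1 p2 p3 ps pL] : [/\ 0 <= b1, 0 <= b2, 0 <= b3,
    b1 + b2 + b3 = Z.abs (X1 x) + Z.abs (X2 x) + Z.abs (X3 x)
  & Z.abs (Z.abs (X1 x) - b1) + Z.abs (Z.abs (X2 x) - b2) + Z.abs (Z.abs (X3 x) - b3)
    = 2 * Z.of_nat k]%Z.
  by apply: hb; move: hf hk; rewrite /axis_len; case: f => [|[|f]] //=; lia.
have [k1 l1 _ o1] := orthant_sign_mul (same_sign_refl (X1 x)) p1.
have [k2 l2 _ o2] := orthant_sign_mul (same_sign_refl (X2 x)) p2.
have [k3 l3 _ o3] := orthant_sign_mul (same_sign_refl (X3 x)) p3.
rewrite /same_orthant /l1dist.
have [-> -> ->] := @X_mkV n x (orthant_sign (X1 x) (X1 x) * b1) (orthant_sign (X2 x) (X2 x) * b2)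
  (orthant_sign (X3 x) (X3 x) * b3) ltac:(rewrite k1 k2 k3 -hx; exact: ps).
by rewrite l1 l2 l3.
Qed.

Lemma axis_len_le f : (axis_len f <= n)%N.
Proof. by have := sum_abs_X x; rewrite /axis_len; case: f => [|[|f]] /=; lia. Qed.

Lemma far_vertex_near f k s : ((f, k), s) \in far_index ->
  (dist x (far_vertex (f, k, s)) <= k)%N /\ far_vertex (f, k, s) != x.
Proof.
move=> ht; have [hf hk hs] := far_indexP ht.
have := far_vertexP ht; case: far_move => [[b1 b2] b3] [_ _ _ ho hL]; split.
  apply: dist_le (reach_same_orthant ho hL) _.
  by have := card_V_ge x; have := axis_len_le f; lia.
by apply/eqP => e; move: hL; rewrite e /l1dist; lia.
Qed.

Lemma far_vertex_inj : {in far_index &, injective far_vertex}.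
Proof.
move=> [[f k] s] [[f' k'] s'] ht ht' e.
have sgn_neq0 p : orthant_sign p p <> 0%Z by rewrite /orthant_sign; case: (_ || _).
have [hf hk hs] := far_indexP ht; have [hf' hk' hs'] := far_indexP ht'.
have e' : far_move (f, k, s) = far_move (f', k', s').
  case: (far_move (f, k, s)) (far_vertexP ht) => [[b1 b2] b3] [y1 y2 y3 _ _].
  case: (far_move (f', k', s')) (far_vertexP ht') => [[c1 c2] c3] [z1 z2 z3 _ _].
  rewrite -e y1 y2 y3 in z1 z2 z3.
  by rewrite (Z.mul_reg_l _ _ _ (sgn_neq0 _) z1) (Z.mul_reg_l _ _ _ (sgn_neq0 _) z2)
             (Z.mul_reg_l _ _ _ (sgn_neq0 _) z3).
have [-> [/Nat2Z.inj -> /Nat2Z.inj ->]] // :=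
  @axis_move_inj f (Z.of_nat k) (Z.of_nat s) f' (Z.of_nat k') (Z.of_nat s') _ _ _ hf hf'
    ltac:(lia) ltac:(lia) ltac:(lia) ltac:(lia) e'.
Qed.

Lemma uniq_far_index : uniq far_index.
Proof.
by apply: allpairs_pair_uniq => *; rewrite ?iota_uniq //; apply: allpairs_pair_uniq => *;
   apply: iota_uniq.
Qed.

Lemma sum_far_index :
  \big[Rplus/R0]_(t <- far_index) / INR t.1.2 ^ 2 =
  \big[Rplus/R0]_(f <- iota 0 3) \big[Rplus/R0]_(k <- iota 1 (axis_len f)) / INR k.
Proof.
rewrite !big_allpairs_dep; apply: eq_bigr => f _.
rewrite big_seq [X in _ = X]big_seq; apply: eq_bigr => k; rewrite mem_iota => /andP [hk _].
have hk0 : INR k <> 0 by apply: not_0_INR; lia.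
by rewrite /= Rsum_const_seq size_iota; field.
Qed.

Lemma Zinv_ge_ln : ln (INR n + 1) <= Zinv x.
Proof.
apply: (Rle_trans _ (\big[Rplus/R0]_(t <- far_index) / INR t.1.2 ^ 2)).
  rewrite sum_far_index !big_cons big_nil.
  have -> : n = (axis_len 0 + axis_len 1 + axis_len 2)%N.
    by have := sum_abs_X x; rewrite /axis_len /=; lia.
  rewrite !plus_INR.
  have := ln_add3_le (pos_INR (axis_len 0)) (pos_INR (axis_len 1)) (pos_INR (axis_len 2)).
  have := ln_succ_le_harmonic (axis_len 0); have := ln_succ_le_harmonic (axis_len 1).
  have := ln_succ_le_harmonic (axis_len 2); lra.
apply: (Rle_trans _ (\big[Rplus/R0]_(w <- map far_vertex far_index) / INR (dist x w) ^ 2)).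
  rewrite big_map big_seq [X in _ <= X]big_seq; apply: Rsum_le => -[[f k] s] ht.
  have [hd hne] := far_vertex_near ht.
  by apply: Rinv_pow_INR_le; rewrite hd andbT; apply: dist_gt0 => e; rewrite e eqxx in hne.
apply: Rsum_uniq_le => [|w /mapP [t ht ->]|w _]; last exact: inv_INR_pow_ge0.
  by rewrite (map_inj_in_uniq far_vertex_inj) uniq_far_index.
by case: t ht => [[f k] s] /far_vertex_near [].
Qed.
End FarVertices.

(** * Sums of inverse fourth powers of distances *)

Definition natdist (m k : nat) : nat := (m - k) + (k - m).

(* Each value of [natdist i c] is taken at most twice. *)
Lemma sum_natdist_le (F : nat -> R) m c : (forall t, 0 <= F t) -> (c < m)%N ->
  \big[Rplus/R0]_(0 <= i < m) F (natdist i c) <= 2 * \big[Rplus/R0]_(0 <= t < m) F t.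
Proof.
move=> h0 hc; rewrite (@big_cat_nat _ _ _ c) //=; last exact: ltnW.
have -> : \big[Rplus/R0]_(0 <= i < c) F (natdist i c) = \big[Rplus/R0]_(0 <= i < c) F i.+1.
  rewrite big_nat_rev /=; apply: eq_big_nat => i hi; congr F; rewrite /natdist; lia.
have -> : \big[Rplus/R0]_(c <= i < m) F (natdist i c) = \big[Rplus/R0]_(0 <= i < m - c) F i.
  rewrite -{1}[c]add0n big_addn; apply: eq_big_nat => i hi; congr F; rewrite /natdist; lia.
have := Rsum_nat_widen h0 hc; rewrite big_nat_recl //= => h1.
have := Rsum_nat_widen h0 (leq_subr c m).
have := h0 0%N; lra.
Qed.

Lemma sum_max_square (F : nat -> R) m :
  \big[Rplus/R0]_(0 <= i < m) \big[Rplus/R0]_(0 <= j < m) F (maxn i j) =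
  \big[Rplus/R0]_(0 <= k < m) (INR (2 * k + 1) * F k).
Proof.
have row k : \big[Rplus/R0]_(0 <= j < k) F (maxn k j) = INR k * F k.
  rewrite big_seq (eq_bigr (fun=> F k)) => [|j]; last by rewrite mem_iota => hj; congr F; lia.
  by rewrite -big_seq Rsum_const_seq size_iota subn0.
have row' k : \big[Rplus/R0]_(0 <= j < k) F (maxn j k) = INR k * F k.
  by rewrite -row; apply: eq_bigr => j _; rewrite maxnC.
elim: m => [|m IH]; first by rewrite !big_geq.
rewrite (eq_bigr (fun i => \big[Rplus/R0]_(0 <= j < m) F (maxn i j) + F (maxn i m))) => [|i _];
  last by rewrite big_nat_recr.
rewrite big_split /= !big_nat_recr //= IH row maxnn.
rewrite (row' m) plus_INR mult_INR /=; lra.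
Qed.

Definition inv4 (t : nat) : R := / INR (maxn 2 t) ^ 4.

Lemma inv4_ge0 t : 0 <= inv4 t.
Proof. exact: inv_INR_pow_ge0. Qed.

(* The tail from [x = M + 3] on telescopes: [(2x + 1) / x^4 <= 1/(x - 1)^2 - 1/x^2]. *)
Lemma sum_odd_inv4_le m : \big[Rplus/R0]_(0 <= k < m) (INR (2 * k + 1) * inv4 k) <= 13 / 16.
Proof.
have step M : INR (2 * (M + 3) + 1) * inv4 (M + 3) <= / INR (M + 2) ^ 2 - / INR (M + 3) ^ 2.
  rewrite /inv4 (maxn_idPr (_ : 2 <= M + 3)%N); last lia.
  rewrite plus_INR mult_INR INR_1 (_ : INR 2 = 2); last by rewrite /=; lra.
  have -> : INR (M + 2) = INR (M + 3) - 1 by rewrite !plus_INR /=; lra.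
  have hx : 3 <= INR (M + 3) by rewrite plus_INR /=; have := pos_INR M; lra.
  move: (INR (M + 3)) hx => x hx.
  have e : / (x - 1) ^ 2 - / x ^ 2 - (2 * x + 1) * / x ^ 4 =
           (2 * x ^ 2 - 1) / (x ^ 4 * (x - 1) ^ 2) by field; lra.
  have : 0 <= (2 * x ^ 2 - 1) / (x ^ 4 * (x - 1) ^ 2).
    by apply: Rmult_le_pos; [nra | apply/Rinv_ge0/Rmult_le_pos; apply: pow_le; lra].
  lra.
have tail M : \big[Rplus/R0]_(0 <= k < M + 3) (INR (2 * k + 1) * inv4 k) <=
              13 / 16 - / INR (M + 2) ^ 2.
  elim: M => [|M IH].
    by rewrite !big_nat_recr //= big_geq // /inv4 /=; lra.
  rewrite (_ : (M.+1 + 2 = M + 3)%N); last lia.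
  rewrite addSn big_nat_recr // [X in X <= _]/=; have := step M; lra.
have := Rsum_nat_widen (fun k => Rmult_le_pos _ _ (pos_INR (2 * k + 1)) (inv4_ge0 k))
  (leq_addr 3 m).
have := tail m; have := inv_INR_pow_ge0 (m + 2) 2; lra.
Qed.

Lemma sum_grid_inv4_le m c1 c2 : (c1 < m)%N -> (c2 < m)%N ->
  \big[Rplus/R0]_(0 <= i < m) \big[Rplus/R0]_(0 <= j < m)
    inv4 (maxn (natdist i c1) (natdist j c2)) <= 13 / 4.
Proof.
move=> hc1 hc2.
have row_ge0 s : 0 <= \big[Rplus/R0]_(0 <= t < m) inv4 (maxn s t).
  by apply: Rsum_ge0 => t _; apply: inv4_ge0.
apply: (Rle_trans _ (\big[Rplus/R0]_(0 <= i < m)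
                       (2 * \big[Rplus/R0]_(0 <= t < m) inv4 (maxn (natdist i c1) t)))).
  by apply: Rsum_le => i _; apply: (sum_natdist_le (fun t => inv4_ge0 _)).
rewrite -big_distrr /=.
have := sum_natdist_le row_ge0 hc1; rewrite sum_max_square.
have := sum_odd_inv4_le m; lra.
Qed.

Lemma natdist_coordZ n (i j : 'I_(n.*2.+1)) : Z.of_nat (natdist i j) = Z.abs (coordZ i - coordZ j).
Proof. rewrite /natdist /coordZ; lia. Qed.

(* [b] is determined by its first two coordinates and the sign of the third, since
   [|b_3| = n - |b_1| - |b_2|]. *)
Lemma sum_inv_pow4_le n (x : V n) (D : V n -> nat) :
  (forall b, Z.abs (X1 x - X1 b) <= Z.of_nat (D b) /\ Z.abs (X2 x - X2 b) <= Z.of_nat (D b))%Z ->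
  \big[Rplus/R0]_(b | (2 <= D b)%N) / INR (D b) ^ 4 <= 13 / 2.
Proof.
move=> hD.
pose G (ij : 'I_(n.*2.+1) * 'I_(n.*2.+1)) :=
  inv4 (maxn (natdist ij.1 (val x).1.1) (natdist ij.2 (val x).1.2)).
pose proj (b : V n) := ((val b).1.1, (val b).1.2, (0 <=? X3 b)%Z).
apply: (Rle_trans _ (\big[Rplus/R0]_b G (proj b).1)).
  apply: (Rle_trans _ (\big[Rplus/R0]_(b | (2 <= D b)%N) G (proj b).1)).
    apply: Rsum_le => b hb; apply: Rinv_pow_INR_le.
    have [h1 h2] := hD b; move: h1 h2; rewrite /X1 /X2 /Defs.c1 /c2.
    by rewrite -!natdist_coordZ; move: hb; rewrite /natdist /=; lia.
  by apply: Rsum_subset => // b _; apply: inv4_ge0.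
apply: (Rle_trans _ (\big[Rplus/R0]_p G p.1)).
  apply: (Rsum_inj_le (F := fun p => G p.1)) => [p|b b' _ _ [e1 e2 e3]]; first exact: inv4_ge0.
  have hb := sum_abs_X b; have hb' := sum_abs_X b'.
  have f1 : X1 b = X1 b' by rewrite /X1 /Defs.c1 e1.
  have f2 : X2 b = X2 b' by rewrite /X2 /c2 e2.
  apply: V_ext => //; move: e3 hb hb'; rewrite f1 f2.
  by case: (Z.leb_spec 0 (X3 b)); case: (Z.leb_spec 0 (X3 b')) => // ? ? _; lia.
rewrite -(pair_bigA _ (fun ij _ => G ij)) /=.
rewrite (eq_bigr (fun ij => 2 * G ij)) => [|ij _]; last by rewrite big_bool /=; lra.
rewrite -big_distrr -(pair_bigA _ (fun i j => G (i, j))) /=.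
pose H (i j : nat) := inv4 (maxn (natdist i (val x).1.1) (natdist j (val x).1.2)).
rewrite (eq_bigr (fun i : 'I_n.*2.+1 => \big[Rplus/R0]_(0 <= j < n.*2.+1) H i j)) => [|i _];
  last by rewrite big_mkord.
rewrite -(big_mkord xpredT (fun i => \big[Rplus/R0]_(0 <= j < n.*2.+1) H i j)).
have := sum_grid_inv4_le (ltn_ord (val x).1.1) (ltn_ord (val x).1.2); rewrite /H; lra.
Qed.

(** * Degrees and the main estimate *)

Definition unit_steps : seq (Z * Z * Z) :=
  [seq (ab, c) | ab <- [seq (a, b) | a <- [:: (-1)%Z; 0%Z; 1%Z], b <- [:: (-1)%Z; 0%Z; 1%Z]],
                 c <- [:: (-1)%Z; 0%Z; 1%Z]].

Lemma mem_unit_steps a b c :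
  (Z.abs a <= 1)%Z -> (Z.abs b <= 1)%Z -> (Z.abs c <= 1)%Z -> (a, b, c) \in unit_steps.
Proof.
move=> ha hb hc; have unit d : (Z.abs d <= 1)%Z -> d \in [:: (-1)%Z; 0%Z; 1%Z].
  by move=> hd; have [->|[->|->]] : (d = -1 \/ d = 0 \/ d = 1)%Z by lia.
apply/allpairsP; exists ((a, b), c); split; rewrite ?unit //.
by apply/allpairsP; exists (a, b); rewrite !unit.
Qed.

Definition gain (p d : Z) : Z := (Z.abs (p + d) - Z.abs p)%Z.

Lemma gain_sgn p d : (Z.abs d <= 1)%Z -> gain (Z.sgn p) d = gain p d.
Proof. rewrite /gain; lia. Qed.

Definition balanced_steps (p : Z * Z * Z) : seq (Z * Z * Z) :=
  [seq d <- unit_steps | (d != (0, 0, 0)%Z) &&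
                         (gain p.1.1 d.1.1 + gain p.1.2 d.1.2 + gain p.2 d.2 == 0)%Z].

(* A neighbour [a] of [u] is determined by the unit step [a - u], which is nonzero and has
   total gain 0 because [|a|_1 = |u|_1]; as gains only depend on signs, the count is checked
   for each of the 27 sign patterns of [u]. *)
Lemma size_balanced_steps : all (fun p => size (balanced_steps p) <= 6)%N unit_steps.
Proof. by []. Qed.

Lemma card_adj_le6 n (u : V n) : (#|[pred a | adj u a]| <= 6)%N.
Proof.
pose step (a : V n) := (X1 a - X1 u, X2 a - X2 u, X3 a - X3 u)%Z.
pose sgn_u := (Z.sgn (X1 u), Z.sgn (X2 u), Z.sgn (X3 u)).
have : sgn_u \in unit_steps by apply: mem_unit_steps; lia.
move/(allP size_balanced_steps); apply: leq_trans.
rewrite cardE -(size_map step); apply: uniq_leq_size.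
  rewrite map_inj_in_uniq ?enum_uniq // => a a' _ _ [e1 e2 e3].
  by apply: V_ext; lia.
move=> d /mapP [a]; rewrite mem_enum => /adj_sym /adjP [hne [h1 [h2 h3]]] ->.
rewrite mem_filter mem_unit_steps ?andbT; try lia.
apply/andP; split.
  by apply/eqP => -[e1 e2 e3]; apply: hne; apply: V_ext; lia.
rewrite /= !gain_sgn; try lia.
by have := sum_abs_X a; have := sum_abs_X u; rewrite /gain => hu ha; apply/eqP; lia.
Qed.

Lemma pchoose_le n (x y : V n) L : 0 < L -> L <= Zinv x ->
  pchoose x y <= / L * / INR (dist x y) ^ 2.
Proof.
move=> hL hx; rewrite /pchoose; case: eqP => _.
  exact/Rmult_le_pos/inv_INR_pow_ge0/Rlt_le/Rinv_0_lt_compat.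
apply: Rmult_le_compat_r; first exact: inv_INR_pow_ge0.
exact: Rinv_le_contravar.
Qed.

Lemma Rmult_inv_pow2_le d1 d2 : / d1 ^ 2 * / d2 ^ 2 <= (/ d1 ^ 4 + / d2 ^ 4) / 2.
Proof.
have e1 : / d1 ^ 4 = (/ d1 ^ 2) ^ 2 by rewrite pow_inv -pow_mult.
have e2 : / d2 ^ 4 = (/ d2 ^ 2) ^ 2 by rewrite pow_inv -pow_mult.
rewrite e1 e2; have := pow2_ge_0 (/ d1 ^ 2 - / d2 ^ 2); lra.
Qed.

Lemma sum_two_links_le n (u a : V n) L : 0 < L -> (forall x : V n, L <= Zinv x) ->
  \big[Rplus/R0]_(b | long_link a b && long_link b u) (pchoose a b * pchoose b u)
  <= 13 / 2 * / L ^ 2.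
Proof.
move=> hL hZ; set P := fun b => long_link a b && long_link b u.
have hLi : 0 <= / L by apply/Rlt_le/Rinv_0_lt_compat.
have K1 : \big[Rplus/R0]_(b | P b) / INR (dist a b) ^ 4 <= 13 / 2.
  apply: Rle_trans (sum_inv_pow4_le (x := a) (D := dist a) _); last first.
    by move=> b; have := coord_le_dist a b; lia.
  by apply: Rsum_subset => [b _|b /andP [/andP [_ ->]]] //; apply: inv_INR_pow_ge0.
have K2 : \big[Rplus/R0]_(b | P b) / INR (dist b u) ^ 4 <= 13 / 2.
  apply: Rle_trans (sum_inv_pow4_le (x := u) (D := fun b => dist b u) _); last first.
    by move=> b; have := coord_le_dist b u; lia.
  by apply: Rsum_subset => [b _|b /andP [_ /andP [_ ->]]] //; apply: inv_INR_pow_ge0.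
apply: (Rle_trans _ (\big[Rplus/R0]_(b | P b)
          (/ L ^ 2 / 2 * (/ INR (dist a b) ^ 4 + / INR (dist b u) ^ 4)))).
  apply: Rsum_le => b _.
  apply: (Rle_trans _ (/ L * / INR (dist a b) ^ 2 * (/ L * / INR (dist b u) ^ 2))).
    by apply: Rmult_le_compat; try apply: pchoose_le; try apply: pchoose_ge0.
  have := Rmult_inv_pow2_le (INR (dist a b)) (INR (dist b u)).
  have hL2 : / L ^ 2 = / L * / L by rewrite -Rinv_mult; congr Rinv; ring.
  rewrite hL2; have := Rmult_le_pos _ _ hLi hLi; nra.
have hc : 0 <= / L ^ 2 / 2 by apply: Rmult_le_pos; [apply/Rinv_ge0/pow_le/Rlt_le | lra].
by move: hc K1 K2; rewrite -big_distrr big_split /=; nra.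
Qed.

Lemma zeta3_ge z : zeta3_is z -> 9 / 8 <= z.
Proof.
move=> hz; set s := fun N => sum_f_R0 (fun i => / INR i.+1 ^ 3) N.
have s1 : s 1%N = 9 / 8 by rewrite /s /=; field.
have s_ge N : s 1%N <= s N.+1.
  elim: N => [|N IH]; first lra.
  by have := inv_INR_pow_ge0 N.+3 3; rewrite /s /= in IH *; lra.
apply: Rnot_lt_le => hlt.
have [N hN] := hz (9 / 8 - z) ltac:(lra).
have := hN N.+1 (le_S _ _ (le_n N)); rewrite /R_dist.
have := Rle_abs (s N.+1 - z); have := s_ge N; rewrite s1 /s; lra.
Qed.

Unset Implicit Arguments.

Theorem lemma7 (n : nat) (hn : (0 < n)%N) (u : V n) (z : R) (hz : zeta3_is z) :
  Rlt (Pr (E3 u)) (Rdiv (Rmult (IZR 36) z) (pow (ln (Rplus (INR n) R1)) 2)).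
Proof.
set L := ln (Rplus (INR n) R1).
have hL : 0 < L by rewrite /L -ln_1; apply: ln_increasing; have := lt_0_INR n (ltP hn); lra.
have hc : 0 < / L ^ 2 by apply/Rinv_0_lt_compat/pow_lt.
have hdeg : INR #|[pred a | adj u a]| <= 6.
  by have := le_INR _ _ (elimT leP (card_adj_le6 u)); rewrite [INR 6]/=; lra.
have hcycles : Pr (E3 u) <= INR #|[pred a | adj u a]| * (13 / 2 * / L ^ 2).
  apply: Rle_trans (Pr_E3_le u) _; rewrite -Rsum_const.
  by apply: Rsum_le => a _; apply: sum_two_links_le => // x; apply: Zinv_ge_ln.
have := zeta3_ge hz; rewrite /Rdiv; nra.
Qed.
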